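(* Let $(a_k)_{k\ge 0}$ be a sequence of positive reals such that $a_{k+1}/a_k$ is strictly decreasing in $k$ and tends to $0$. Let $F(t)=\sum_{k\ge0}a_kt^k$ (an entire function) and consider the power series family of distributions $f(k;t)=a_kt^k/F(t)$, $k\ge 0$, with parameter $t\ge 0$. Let $\mu(t)=\sum_k k f(k;t)$ be the mean, $t_0:=0$ and $t_k:=a_{k-1}/a_k$ for $k\ge1$; let $m_+(t)$ be the leading mode of $f(\cdot;t)$, and for $k\ge0$ let $\ell(k)$ be the unique solution $t\ge0$ of $\mu(t)=k$. Then the family is cross modal if and only if, for every $t\ge 0$ such that $\mu(t)$ is an integer, $\mu(t)$ is a mode of $f(\cdot;t)$. Moreover this condition is equivalent to each of the following: (i) $t_k\le \ell(k)\le t_{k+1}$ for all $k\ge1$; (ii) $k-1\le \mu(t_k)\le k$ for all $k\ge1$; (iii) $\sup_{t\ge0}|\mu(t)-m_+(t)|\le 1$.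
   Context: A mode of a probability function $g$ on $\{0,1,2,\dots\}$ is any $k$ with $g(k)=\max_j g(j)$. The leading mode $m_+$ of a log-concave probability function $g$ (extended by $g(-1)=0$) is the unique integer $k$ with $g(k-1)\le g(k)>g(k+1)$. The mean $\mu(t)$ is continuous and strictly increasing from $\mu(0)=0$ to $\infty$, so $\ell(k)$ is well defined. The family $\{f(\cdot;t):t\ge0\}$ is called cross modal if for every $k\ge0$ the likelihood $t\mapsto f(k;t)$ attains its maximum on $[0,\infty)$ and for every maximiser $t_0$ of it, $k$ is a mode of $f(\cdot;t_0)$. *)

From Stdlib Require Import Reals.
From Coquelicot Require Import Coquelicot.
Open Scope R_scope.

Definition PSF (a : nat -> R) (t : R) : R := Series (fun k => a k * t ^ k).

Definition pmf (a : nat -> R) (t : R) (k : nat) : R := a k * t ^ k / PSF a t.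

Definition mean (a : nat -> R) (t : R) : R := Series (fun k => INR k * pmf a t k).

Definition is_mode (g : nat -> R) (k : nat) : Prop := forall j : nat, g j <= g k.

Definition is_leading_mode (g : nat -> R) (k : nat) : Prop :=
  (match k with O => 0 | S k' => g k' end) <= g k /\ g (S k) < g k.

Definition cross_modal (f : R -> nat -> R) : Prop :=
  forall k : nat,
    (exists t0, 0 <= t0 /\ forall t, 0 <= t -> f t k <= f t0 k) /\
    (forall t0, 0 <= t0 -> (forall t, 0 <= t -> f t k <= f t0 k) ->
       is_mode (f t0) k).

Definition tk (a : nat -> R) (k : nat) : R :=
  match k with O => 0 | S k' => a k' / a k end.

From Stdlib Require Import Reals Lra Lia.
From Coquelicot Require Import Coquelicot.
Open Scope R_scope.

(* Since f(k+1;t) - f(k;t) has the sign of t - t_(k+1) and the t_k increase, f(.;t) rises up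
   to the k with t_k <= t and falls afterwards: its modes are the k with t_k <= t <= t_(k+1),
   its leading mode the k with t_k <= t < t_(k+1).  Jensen's inequality for exp shows that
   ln F(e^x) lies strictly above its tangent lines, whose slopes are mu(e^x).  Hence mu is
   strictly increasing and unbounded, so, being continuous, it takes each integer value k at a
   unique ell(k), where the likelihood a_k t^k / F(t) is uniquely maximal.  Each condition then
   compares the level sets of mu with the intervals [t_k, t_(k+1)], and monotonicity of mu
   transports one into another. *)

Lemma Series_ge_term (h : nat -> R) (j : nat) :
  ex_series h -> (forall n, 0 <= h n) -> h j <= Series h.
Proof.
  intros Hex Hnn.
  rewrite (Series_incr_n h (S j)) by (lia || assumption); simpl pred.
  assert (Htail : 0 <= Series (fun k => h (S j + k)%nat)).
  { rewrite <- (Rmult_0_l (Series h)), <- Series_scal_l.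
    apply Series_le; [intros n; rewrite Rmult_0_l; split; [lra | apply Hnn] |].
    now apply (ex_series_incr_n h (S j)). }
  assert (Hpartial : h j <= sum_f_R0 h j).
  { destruct j as [|j]; simpl; [lra |].
    assert (0 <= sum_f_R0 h j) by (apply cond_pos_sum; exact Hnn). lra. }
  lra.
Qed.

Lemma jensen_exp_strict (p : nat -> R) (L : R) :
  (forall k, 0 <= p k) -> ex_series p -> Series p = 1 ->
  ex_series (fun k => INR k * p k) ->
  ex_series (fun k => p k * exp (INR k * L)) -> L <> 0 ->
  (exists j, 0 < p j /\ INR j <> Series (fun k => INR k * p k)) ->
  exp (Series (fun k => INR k * p k) * L) < Series (fun k => p k * exp (INR k * L)).
Proof.
  intros Hnn Hp Hsum Hm He HL [j [Hj Hjmu]].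
  set (mu := Series (fun k => INR k * p k)) in *.
  set (gap := fun k => p k * exp (INR k * L)
                      - (exp (mu * L) * (1 - mu * L) * p k + exp (mu * L) * L * (INR k * p k))).
  assert (Hgap : forall k, gap k = p k * exp (mu * L)
                                   * (exp ((INR k - mu) * L) - (1 + (INR k - mu) * L))).
  { intros k. unfold gap. replace (INR k * L) with (mu * L + (INR k - mu) * L) by ring.
    rewrite exp_plus. ring. }
  assert (Hex1 := ex_series_scal_l (exp (mu * L) * (1 - mu * L)) p Hp).
  assert (Hex2 := ex_series_scal_l (exp (mu * L) * L) _ Hm).
  assert (Hsum_gap : Series gap = Series (fun k => p k * exp (INR k * L)) - exp (mu * L)).
  { unfold gap. rewrite Series_minus, Series_plus, !Series_scal_l; auto.
    - fold mu. rewrite Hsum. ring.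
    - now apply (ex_series_plus _ _ Hex1 Hex2). }
  assert (Hpos : 0 < Series gap).
  { apply Rlt_le_trans with (gap j).
    - rewrite Hgap. apply Rmult_lt_0_compat; [apply Rmult_lt_0_compat; [exact Hj | apply exp_pos] |].
      assert (Hne : (INR j - mu) * L <> 0) by (apply Rmult_integral_contrapositive; split; lra).
      pose proof (exp_ineq1 _ Hne). lra.
    - apply Series_ge_term.
      + eapply ex_series_ext; [| apply (ex_series_minus _ _ He (ex_series_plus _ _ Hex1 Hex2))].
        intros k; reflexivity.
      + intros k. rewrite Hgap. apply Rmult_le_pos; [apply Rmult_le_pos; [apply Hnn | apply Rlt_le, exp_pos] |].
        pose proof (exp_ineq1_le ((INR k - mu) * L)). lra. }
  lra.
Qed.

Lemma is_mode_of_unimodal (u : nat -> R) (k : nat) :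
  (forall j, (j < k)%nat -> u j <= u (S j)) ->
  (forall j, (k <= j)%nat -> u (S j) <= u j) -> is_mode u k.
Proof.
  intros Hup Hdown j. destruct (Nat.le_gt_cases j k) as [Hjk | Hkj].
  - replace k with (j + (k - j))%nat by lia.
    assert (Hjk' : (j + (k - j) <= k)%nat) by lia. revert Hjk'.
    induction (k - j)%nat as [|d IH]; intros Hd; rewrite ?Nat.add_0_r; [apply Rle_refl |].
    rewrite Nat.add_succ_r. pose proof (Hup (j + d)%nat ltac:(lia)). pose proof (IH ltac:(lia)). lra.
  - induction Hkj as [| j Hj IH]; [apply Hdown, le_n |].
    pose proof (Hdown j ltac:(lia)). lra.
Qed.

Section PowerSeriesFamily.

Variable a : nat -> R.
Hypothesis a_pos : forall k, 0 < a k.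
Hypothesis ratio_decr : forall k, a (S (S k)) / a (S k) < a (S k) / a k.
Hypothesis ratio_lim : is_lim_seq (fun k => a (S k) / a k) 0.

Definition term (t : R) (k : nat) : R := a k * t ^ k.

Lemma CV_radius_coef : CV_radius a = p_infty.
Proof.
  apply CV_radius_infinite_DAlembert; [intros n; pose proof (a_pos n); lra |].
  eapply is_lim_seq_ext; [| exact ratio_lim]. intros n.
  rewrite Rabs_right; [reflexivity |]. apply Rle_ge, Rlt_le, Rdiv_lt_0_compat; apply a_pos.
Qed.

Lemma CV_radius_weighted_coef : CV_radius (fun k => INR k * a k) = p_infty.
Proof.
  rewrite <- CV_radius_coef, <- (CV_radius_derive a), <- (CV_radius_incr_1 (PS_derive a)).
  apply CV_radius_ext. intros [|n]; [apply Rmult_0_l | reflexivity].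
Qed.

Lemma ex_series_term (t : R) : ex_series (term t).
Proof.
  apply ex_pseries_R, CV_radius_inside. now rewrite CV_radius_coef.
Qed.

Lemma ex_series_weighted_term (t : R) : ex_series (fun k => INR k * term t k).
Proof.
  assert (Hex := CV_radius_inside (fun k => INR k * a k) t).
  rewrite CV_radius_weighted_coef in Hex. specialize (Hex I). apply ex_pseries_R in Hex.
  eapply ex_series_ext; [| exact Hex]. intros k. apply Rmult_assoc.
Qed.

Lemma term_nonneg (t : R) (k : nat) : 0 <= t -> 0 <= term t k.
Proof. intros Ht. apply Rmult_le_pos; [apply Rlt_le, a_pos | now apply pow_le]. Qed.

Lemma PSF_at_0 : PSF a 0 = a 0%nat.
Proof. apply PSeries_0. Qed.

Lemma PSF_gt_coef0 (t : R) : 0 < t -> a 0%nat < PSF a t.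
Proof.
  intros Ht. unfold PSF. rewrite Series_incr_1 by apply ex_series_term.
  assert (Htail : a 1%nat * t <= Series (fun k => a (S k) * t ^ S k)).
  { replace (a 1%nat * t) with (a 1%nat * t ^ 1) by ring.
    apply (Series_ge_term (fun k => a (S k) * t ^ S k) 0).
    - apply (ex_series_incr_1 (term t)), ex_series_term.
    - intros n. apply (term_nonneg t (S n)). lra. }
  pose proof (a_pos 1). simpl in Htail |- *. nra.
Qed.

Lemma PSF_pos (t : R) : 0 <= t -> 0 < PSF a t.
Proof.
  intros Ht. destruct (Rle_lt_or_eq_dec 0 t Ht) as [Ht' | <-].
  - pose proof (a_pos 0); pose proof (PSF_gt_coef0 t Ht'). lra.
  - rewrite PSF_at_0. apply a_pos.
Qed.

Lemma pmf_nonneg (t : R) (k : nat) : 0 <= t -> 0 <= pmf a t k.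
Proof.
  intros Ht. apply Rdiv_le_0_compat; [now apply term_nonneg | now apply PSF_pos].
Qed.

Lemma pmf_pos (t : R) (k : nat) : 0 < t -> 0 < pmf a t k.
Proof.
  intros Ht. apply Rdiv_lt_0_compat; [| apply PSF_pos; lra].
  apply Rmult_lt_0_compat; [apply a_pos | now apply pow_lt].
Qed.

Lemma ex_series_pmf (t : R) : ex_series (pmf a t).
Proof. apply ex_series_scal_r, ex_series_term. Qed.

Lemma ex_series_weighted_pmf (t : R) : ex_series (fun k => INR k * pmf a t k).
Proof.
  eapply ex_series_ext; [| apply (ex_series_scal_r (/ PSF a t)), (ex_series_weighted_term t)].
  intros k. simpl. unfold pmf, term, Rdiv. ring.
Qed.

Lemma Series_pmf (t : R) : 0 <= t -> Series (pmf a t) = 1.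
Proof.
  intros Ht. unfold pmf, Rdiv. rewrite Series_scal_r.
  pose proof (PSF_pos t Ht). unfold PSF in *. field. lra.
Qed.

Lemma pmf_at_0 (k : nat) : pmf a 0 k = match k with O => 1 | S _ => 0 end.
Proof.
  unfold pmf. rewrite PSF_at_0. pose proof (a_pos 0).
  destruct k; simpl; field; lra.
Qed.

Lemma mean_at_0 : mean a 0 = 0.
Proof.
  transitivity (PSeries (fun k => INR k * a k / PSF a 0) 0).
  - apply Series_ext. intros k. unfold pmf, Rdiv. ring.
  - rewrite PSeries_0. simpl. unfold Rdiv. ring.
Qed.

Lemma mean_pos (t : R) : 0 < t -> 0 < mean a t.
Proof.
  intros Ht. apply Rlt_le_trans with (INR 1 * pmf a t 1).
  - rewrite Rmult_1_l. now apply pmf_pos.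
  - apply (Series_ge_term (fun k => INR k * pmf a t k)); [apply ex_series_weighted_pmf |].
    intros k. apply Rmult_le_pos; [apply pos_INR | apply pmf_nonneg; lra].
Qed.

Lemma exp_INR_ln (x : R) (k : nat) : 0 < x -> exp (INR k * ln x) = x ^ k.
Proof. apply Rpower_pow. Qed.

(* [ln F(e^x)] is strictly convex with slope [mean]: the graph lies above its tangent lines. *)
Lemma PSF_gt_tangent (s t : R) :
  0 < s -> 0 < t -> s <> t -> exp (mean a s * (ln t - ln s)) * PSF a s < PSF a t.
Proof.
  intros Hs Ht Hst.
  assert (Fs := PSF_pos s (Rlt_le _ _ Hs)).
  assert (Hratio : forall k, pmf a s k * exp (INR k * (ln t - ln s)) = term t k / PSF a s).
  { intros k. replace (INR k * (ln t - ln s)) with (INR k * ln t + - (INR k * ln s)) by ring.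
    rewrite exp_plus, exp_Ropp, !exp_INR_ln by assumption.
    unfold pmf, term. field. split; [lra | now apply pow_nonzero, Rgt_not_eq]. }
  assert (HL : ln t - ln s <> 0).
  { intros HL. apply Hst, ln_inv; [assumption | assumption | lra]. }
  pose proof (jensen_exp_strict (pmf a s) (ln t - ln s)) as Hjensen.
  rewrite (Series_ext _ _ Hratio) in Hjensen. unfold Rdiv in Hjensen. rewrite Series_scal_r in Hjensen.
  fold (mean a s) in Hjensen. fold (PSF a t) in Hjensen.
  apply (Rmult_lt_reg_r (/ PSF a s)); [now apply Rinv_0_lt_compat |].
  rewrite Rmult_assoc, Rinv_r, Rmult_1_r by lra.
  apply Hjensen.
  - intros k. apply pmf_nonneg. lra.
  - apply ex_series_pmf.
  - apply Series_pmf. lra.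
  - apply ex_series_weighted_pmf.
  - eapply ex_series_ext; [| apply (ex_series_scal_r (/ PSF a s)), (ex_series_term t)].
    intros k. simpl. rewrite Hratio. reflexivity.
  - exact HL.
  - destruct (Req_dec (mean a s) 0) as [Hm0 | Hm0].
    + exists 1%nat. split; [now apply pmf_pos |]. fold (mean a s). rewrite Hm0. simpl. lra.
    + exists 0%nat. split; [now apply pmf_pos |]. fold (mean a s). simpl. lra.
Qed.

(* The tangent inequalities at [s] and at [t] squeeze [ln F(t) - ln F(s)] between
   [mean s * L] and [mean t * L]. *)
Lemma mean_lt (s t : R) : 0 <= s < t -> mean a s < mean a t.
Proof.
  intros [Hs Hst]. destruct (Rle_lt_or_eq_dec 0 s Hs) as [Hs' | <-].
  2: { rewrite mean_at_0. now apply mean_pos. }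
  assert (Ht : 0 < t) by lra.
  assert (Fs := PSF_pos s Hs).
  set (L := ln t - ln s).
  assert (HL : 0 < L) by (unfold L; pose proof (ln_increasing s t Hs' Hst); lra).
  assert (Hup := PSF_gt_tangent s t Hs' Ht (Rlt_not_eq _ _ Hst)).
  assert (Hdown := PSF_gt_tangent t s Ht Hs' (Rgt_not_eq _ _ Hst)).
  replace (mean a t * (ln s - ln t)) with (- (mean a t * L)) in Hdown by (unfold L; ring).
  rewrite exp_Ropp in Hdown. fold L in Hup.
  assert (He : exp (mean a s * L) < exp (mean a t * L)).
  { pose proof (exp_pos (mean a t * L)) as Epos.
    apply (Rmult_lt_reg_r (PSF a s)); [assumption |].
    apply Rlt_trans with (PSF a t); [assumption |].
    apply (Rmult_lt_compat_l (exp (mean a t * L))) in Hdown; [| assumption].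
    rewrite <- Rmult_assoc, Rinv_r, Rmult_1_l in Hdown by lra. lra. }
  apply exp_lt_inv in He. nra.
Qed.

Lemma mean_le (s t : R) : 0 <= s <= t -> mean a s <= mean a t.
Proof.
  intros [Hs [Hst | <-]]; [apply Rlt_le, mean_lt; lra | apply Rle_refl].
Qed.

Lemma mean_eq_0 (t : R) : 0 <= t -> mean a t = 0 -> t = 0.
Proof.
  intros Ht Hm. destruct (Rle_lt_or_eq_dec 0 t Ht) as [Ht' | <-]; [| reflexivity].
  pose proof (mean_pos t Ht'). lra.
Qed.

Lemma pmf_lt_at_mean (t0 t : R) (k : nat) :
  0 <= t0 -> mean a t0 = INR k -> 0 <= t -> t <> t0 -> pmf a t k < pmf a t0 k.
Proof.
  intros Ht0 Hm Ht Hne. destruct (Rle_lt_or_eq_dec 0 t0 Ht0) as [Ht0' | <-].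
  - assert (Hk : k <> 0%nat) by (intros ->; pose proof (mean_pos t0 Ht0'); simpl in Hm; lra).
    destruct (Rle_lt_or_eq_dec 0 t Ht) as [Ht' | <-].
    + assert (F0 := PSF_pos t0 Ht0). assert (Ft := PSF_pos t Ht).
      assert (Htan := PSF_gt_tangent t0 t Ht0' Ht' (not_eq_sym Hne)).
      rewrite Hm in Htan.
      set (c := exp (INR k * (ln t - ln t0)) * PSF a t0 / PSF a t) in *.
      assert (Hc : c < 1) by (unfold c; apply (Rmult_lt_reg_r (PSF a t)); [lra | field_simplify; lra]).
      assert (Hpmf : pmf a t k = c * pmf a t0 k).
      { unfold c. replace (INR k * (ln t - ln t0)) with (INR k * ln t + - (INR k * ln t0)) by ring.
        rewrite exp_plus, exp_Ropp, !exp_INR_ln by assumption.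
        unfold pmf. field. repeat split; try lra. now apply pow_nonzero, Rgt_not_eq. }
      rewrite Hpmf. pose proof (pmf_pos t0 k Ht0'). nra.
    + destruct k as [|k]; [contradiction |].
      rewrite pmf_at_0. now apply pmf_pos.
  - rewrite mean_at_0 in Hm. destruct k as [|k]; [| pose proof (pos_INR k); rewrite S_INR in Hm; lra].
    assert (Ft := PSF_gt_coef0 t ltac:(lra)). pose proof (a_pos 0).
    rewrite (pmf_at_0 0). unfold pmf. simpl. rewrite Rmult_1_r.
    apply (Rmult_lt_reg_r (PSF a t)); [lra |].
    unfold Rdiv. rewrite Rmult_assoc, Rinv_l, Rmult_1_r, Rmult_1_l by lra. exact Ft.
Qed.

Lemma mean_continuous (x : R) : 0 <= x -> continuity_pt (mean a) x.
Proof.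
  intros Hx.
  apply continuity_pt_ext with (fun t => PSeries (fun k => INR k * a k) t / PSeries a t).
  { intros t. unfold mean, pmf, PSeries, Rdiv. fold (PSF a t). rewrite <- Series_scal_r.
    apply Series_ext. intros k. ring. }
  apply continuity_pt_div.
  - apply PSeries_continuity. now rewrite CV_radius_weighted_coef.
  - apply PSeries_continuity. now rewrite CV_radius_coef.
  - apply Rgt_not_eq, (PSF_pos x Hx).
Qed.

(* The tangent at [t] gives [F(t) < F(1) t^(mean t)] while [F(t) >= a_(n+1) t^(n+1)], so
   [mean t <= n] would force [a_(n+1) t < F(1)]. *)
Lemma mean_unbounded (n : nat) : exists t, 0 <= t /\ INR n < mean a t.
Proof.
  assert (F1 := PSF_pos 1 Rle_0_1). pose proof (a_pos (S n)) as HaSn.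
  set (t := PSF a 1 / a (S n) + 2).
  assert (Ht1 : 1 < t) by (unfold t; pose proof (Rdiv_lt_0_compat _ _ F1 HaSn); lra).
  exists t. split; [lra |]. destruct (Rlt_le_dec (INR n) (mean a t)) as [| Hle]; [assumption | exfalso].
  assert (Hlnt : 0 < ln t) by (rewrite <- ln_1; apply ln_increasing; lra).
  assert (Htan := PSF_gt_tangent t 1 ltac:(lra) Rlt_0_1 ltac:(lra)).
  rewrite ln_1 in Htan.
  assert (Hexp : / t ^ n <= exp (mean a t * (0 - ln t))).
  { rewrite <- exp_INR_ln, <- exp_Ropp by lra.
    assert (Hmono : - (INR n * ln t) <= mean a t * (0 - ln t)) by nra.
    destruct (Rle_lt_or_eq_dec _ _ Hmono) as [Hlt | ->]; [now apply Rlt_le, exp_increasing | apply Rle_refl]. }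
  assert (Hterm : term t (S n) <= PSF a t).
  { apply Series_ge_term; [apply ex_series_term |]. intros k. apply term_nonneg. lra. }
  assert (Htn : 0 < t ^ n) by (apply pow_lt; lra).
  assert (Hlow : a (S n) * t <= exp (mean a t * (0 - ln t)) * PSF a t).
  { replace (a (S n) * t) with (/ t ^ n * term t (S n)) by (unfold term; simpl; field; lra).
    apply Rmult_le_compat; [apply Rlt_le, Rinv_0_lt_compat, Htn | apply term_nonneg; lra | assumption | assumption]. }
  assert (Hbig : PSF a 1 < a (S n) * t).
  { unfold t. rewrite Rmult_plus_distr_l. field_simplify; [lra | lra]. }
  lra.
Qed.

Lemma mean_surjective (k : nat) : exists s, 0 <= s /\ mean a s = INR k.
Proof.
  destruct k as [|k]; [exists 0; split; [apply Rle_refl | apply mean_at_0] |].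
  destruct (mean_unbounded (S k)) as [T [HT HmT]].
  assert (HSk : 0 < INR (S k)) by apply lt_0_INR, Nat.lt_0_succ.
  assert (HT0 : 0 < T) by (destruct (Rle_lt_or_eq_dec 0 T HT) as [| <-]; [assumption | rewrite mean_at_0 in HmT; lra]).
  destruct (Ranalysis5.IVT_interv (fun x => mean a x - INR (S k)) 0 T) as [s [Hs Hms]].
  - intros x Hx. apply continuity_pt_minus; [apply mean_continuous; lra | apply continuity_pt_const; now intros ? ?].
  - assumption.
  - rewrite mean_at_0. lra.
  - lra.
  - exists s. split; lra.
Qed.

Lemma tk_succ_pos (k : nat) : 0 < tk a (S k).
Proof. apply Rdiv_lt_0_compat; apply a_pos. Qed.

Lemma tk_nonneg (k : nat) : 0 <= tk a k.
Proof. destruct k as [|k]; [apply Rle_refl | apply Rlt_le, tk_succ_pos]. Qed.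

Lemma tk_lt_succ (k : nat) : tk a k < tk a (S k).
Proof.
  destruct k as [|k]; [apply tk_succ_pos |]. simpl.
  pose proof (a_pos k); pose proof (a_pos (S k)); pose proof (a_pos (S (S k))).
  replace (a k / a (S k)) with (/ (a (S k) / a k)) by (field; lra).
  replace (a (S k) / a (S (S k))) with (/ (a (S (S k)) / a (S k))) by (field; lra).
  apply Rinv_lt_contravar; [| apply ratio_decr].
  apply Rmult_lt_0_compat; apply Rdiv_lt_0_compat; assumption.
Qed.

Lemma tk_lt (i j : nat) : (i < j)%nat -> tk a i < tk a j.
Proof.
  induction 1 as [| j _ IH]; [apply tk_lt_succ |].
  pose proof (tk_lt_succ j). lra.
Qed.

Lemma tk_le (i j : nat) : (i <= j)%nat -> tk a i <= tk a j.
Proof.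
  intros Hij. destruct (Nat.eq_dec i j) as [-> | Hne]; [apply Rle_refl |].
  apply Rlt_le, tk_lt. lia.
Qed.

Lemma tk_lt_inv (i j : nat) : tk a i < tk a j -> (i < j)%nat.
Proof.
  intros Hij. destruct (Nat.lt_ge_cases i j) as [| Hji]; [assumption |].
  pose proof (tk_le j i Hji). lra.
Qed.

Lemma tk_unbounded (x : R) : exists N, x < tk a N.
Proof.
  assert (Heps : 0 < / (Rabs x + 1)) by (apply Rinv_0_lt_compat; pose proof (Rabs_pos x); lra).
  apply is_lim_seq_Reals in ratio_lim.
  destruct (ratio_lim _ Heps) as [N HN]. specialize (HN N (le_n N)).
  unfold Rdist in HN. rewrite Rminus_0_r in HN.
  pose proof (a_pos N); pose proof (a_pos (S N)).
  assert (Hr : 0 < a (S N) / a N) by (apply Rdiv_lt_0_compat; assumption).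
  rewrite Rabs_right in HN by lra.
  exists (S N). simpl.
  replace (a N / a (S N)) with (/ (a (S N) / a N)) by (field; lra).
  apply Rinv_lt_contravar in HN; [| now apply Rmult_lt_0_compat].
  rewrite Rinv_inv in HN. pose proof (Rle_abs x). lra.
Qed.

Lemma tk_bracket (x : R) : 0 <= x -> exists j, tk a j <= x < tk a (S j).
Proof.
  intros Hx. destruct (tk_unbounded x) as [N HN]. revert HN.
  induction N as [|N IH]; intros HN; [simpl in HN; lra |].
  destruct (Rle_lt_dec (tk a N) x) as [Hle | Hlt]; [now exists N | now apply IH].
Qed.

Lemma pmf_succ_sub (t : R) (j : nat) :
  pmf a t (S j) - pmf a t j = a (S j) * t ^ j / PSF a t * (t - tk a (S j)).
Proof.
  assert (Hterm : a (S j) * t ^ S j - a j * t ^ j = a (S j) * t ^ j * (t - tk a (S j))).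
  { pose proof (a_pos (S j)). simpl. field. lra. }
  unfold pmf, Rdiv. rewrite <- Rmult_minus_distr_r, Hterm. ring.
Qed.

Lemma pmf_step_factor_nonneg (t : R) (j : nat) : 0 <= t -> 0 <= a (S j) * t ^ j / PSF a t.
Proof.
  intros Ht. apply Rdiv_le_0_compat; [| now apply PSF_pos].
  apply Rmult_le_pos; [apply Rlt_le, a_pos | now apply pow_le].
Qed.

Lemma pmf_succ_le (t : R) (j : nat) : 0 <= t -> t <= tk a (S j) -> pmf a t (S j) <= pmf a t j.
Proof.
  intros Ht Htk. pose proof (pmf_succ_sub t j). pose proof (pmf_step_factor_nonneg t j Ht). nra.
Qed.

Lemma pmf_le_succ (t : R) (j : nat) : tk a (S j) <= t -> pmf a t j <= pmf a t (S j).
Proof.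
  intros Htk. pose proof (tk_succ_pos j).
  pose proof (pmf_succ_sub t j). pose proof (pmf_step_factor_nonneg t j ltac:(lra)). nra.
Qed.

Lemma pmf_succ_lt (t : R) (j : nat) : 0 < t -> t < tk a (S j) -> pmf a t (S j) < pmf a t j.
Proof.
  intros Ht Htk. pose proof (pmf_succ_sub t j).
  assert (0 < a (S j) * t ^ j / PSF a t).
  { apply Rdiv_lt_0_compat; [apply Rmult_lt_0_compat; [apply a_pos | now apply pow_lt] | apply PSF_pos; lra]. }
  nra.
Qed.

Lemma pmf_lt_succ (t : R) (j : nat) : tk a (S j) < t -> pmf a t j < pmf a t (S j).
Proof.
  intros Htk. pose proof (tk_succ_pos j).
  pose proof (pmf_succ_sub t j).
  assert (0 < a (S j) * t ^ j / PSF a t).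
  { apply Rdiv_lt_0_compat; [apply Rmult_lt_0_compat; [apply a_pos | apply pow_lt; lra] | apply PSF_pos; lra]. }
  nra.
Qed.

Lemma is_mode_pmf_iff (t : R) (k : nat) :
  0 <= t -> is_mode (pmf a t) k <-> tk a k <= t <= tk a (S k).
Proof.
  intros Ht. split.
  - intros Hmode. split.
    + destruct k as [|k]; [exact Ht |].
      destruct (Rle_lt_dec (tk a (S k)) t) as [| Hlt]; [assumption | exfalso].
      destruct (Rle_lt_or_eq_dec 0 t Ht) as [Ht' | <-].
      * pose proof (pmf_succ_lt t k Ht' Hlt). specialize (Hmode k). lra.
      * specialize (Hmode 0%nat). rewrite !pmf_at_0 in Hmode. lra.
    + destruct (Rle_lt_dec t (tk a (S k))) as [| Hlt]; [assumption | exfalso].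
      pose proof (pmf_lt_succ t k Hlt). specialize (Hmode (S k)). lra.
  - intros [Hlo Hhi]. apply is_mode_of_unimodal.
    + intros j Hj. apply pmf_le_succ. pose proof (tk_le (S j) k Hj). lra.
    + intros j Hj. apply pmf_succ_le; [assumption |].
      pose proof (tk_le (S k) (S j) (le_n_S _ _ Hj)). lra.
Qed.

Lemma is_leading_mode_pmf_iff (t : R) (m : nat) :
  0 <= t -> is_leading_mode (pmf a t) m <-> tk a m <= t < tk a (S m).
Proof.
  intros Ht. unfold is_leading_mode. split.
  - intros [Hprev Hnext]. split.
    + destruct m as [|m]; [exact Ht |].
      destruct (Rle_lt_dec (tk a (S m)) t) as [| Hlt]; [assumption | exfalso].
      destruct (Rle_lt_or_eq_dec 0 t Ht) as [Ht' | <-].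
      * pose proof (pmf_succ_lt t m Ht' Hlt). lra.
      * rewrite !pmf_at_0 in Hnext. lra.
    + destruct (Rle_lt_dec (tk a (S m)) t) as [Hle | ]; [exfalso | assumption].
      pose proof (pmf_le_succ t m Hle). lra.
  - intros [Hlo Hhi]. split.
    + destruct m as [|m]; [now apply pmf_nonneg | now apply pmf_le_succ].
    + destruct (Rle_lt_or_eq_dec 0 t Ht) as [Ht' | <-]; [now apply pmf_succ_lt |].
      destruct m as [|m]; [rewrite !pmf_at_0; lra |].
      pose proof (tk_succ_pos m). lra.
Qed.

Definition modal_at_integer_means : Prop :=
  forall (t : R) (k : nat), 0 <= t -> mean a t = INR k -> is_mode (pmf a t) k.

Definition ell_in_tk_intervals : Prop :=
  forall k : nat, (1 <= k)%nat ->
    forall s, 0 <= s -> mean a s = INR k -> tk a k <= s <= tk a (S k).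

Definition mean_at_tk_in_intervals : Prop :=
  forall k : nat, (1 <= k)%nat -> INR k - 1 <= mean a (tk a k) <= INR k.

Definition mean_near_leading_mode : Prop :=
  forall t : R, 0 <= t -> forall m : nat, is_leading_mode (pmf a t) m -> Rabs (mean a t - INR m) <= 1.

Lemma cross_modal_iff_modal_at_integer_means : cross_modal (pmf a) <-> modal_at_integer_means.
Proof.
  split.
  - intros Hcm t k Ht Hm. apply (proj2 (Hcm k) t Ht). intros t' Ht'.
    destruct (Req_dec t' t) as [-> | Hne]; [apply Rle_refl |].
    now apply Rlt_le, pmf_lt_at_mean.
  - intros Hmodal k. destruct (mean_surjective k) as [s [Hs Hms]]. split.
    + exists s. split; [assumption |]. intros t Ht.
      destruct (Req_dec t s) as [-> | Hne]; [apply Rle_refl |].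
      now apply Rlt_le, pmf_lt_at_mean.
    + intros t0 Ht0 Hmax. destruct (Req_dec t0 s) as [-> | Hne]; [now apply Hmodal |].
      pose proof (pmf_lt_at_mean s t0 k Hs Hms Ht0 Hne). specialize (Hmax s Hs). lra.
Qed.

Lemma modal_at_integer_means_iff_ell : modal_at_integer_means <-> ell_in_tk_intervals.
Proof.
  split.
  - intros Hmodal k _ s Hs Hms. now apply is_mode_pmf_iff, Hmodal.
  - intros Hell t k Ht Hm. apply is_mode_pmf_iff; [assumption |]. destruct k as [|k].
    + rewrite (mean_eq_0 t Ht Hm). split; [apply Rle_refl | apply tk_nonneg].
    + apply Hell; [lia | assumption | assumption].
Qed.

Lemma ell_iff_mean_at_tk : ell_in_tk_intervals <-> mean_at_tk_in_intervals.
Proof.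
  split.
  - intros Hell k Hk. destruct (mean_surjective k) as [s [Hs Hms]].
    destruct (Hell k Hk s Hs Hms) as [Hlo _]. split.
    + destruct k as [|[|k]]; [inversion Hk | |].
      * pose proof (mean_le 0 (tk a 1) (conj (Rle_refl 0) (tk_nonneg 1))) as Hmono.
        rewrite mean_at_0 in Hmono. change (INR 1) with 1. lra.
      * destruct (mean_surjective (S k)) as [s' [Hs' Hms']].
        destruct (Hell (S k) ltac:(lia) s' Hs' Hms') as [_ Hhi'].
        pose proof (mean_le s' (tk a (S (S k))) (conj Hs' Hhi')).
        rewrite (S_INR (S k)). lra.
    + rewrite <- Hms. apply mean_le. split; [apply tk_nonneg | assumption].
  - intros Hmean k Hk s Hs Hms. specialize (Hmean k Hk) as Hk_mean.
    specialize (Hmean (S k) (le_S _ _ Hk)). rewrite S_INR in Hmean. split.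
    + destruct (Rle_lt_dec (tk a k) s) as [| Hlt]; [assumption | exfalso].
      pose proof (mean_lt s (tk a k) (conj Hs Hlt)). lra.
    + destruct (Rle_lt_dec s (tk a (S k))) as [| Hlt]; [assumption | exfalso].
      pose proof (mean_lt (tk a (S k)) s (conj (tk_nonneg (S k)) Hlt)). lra.
Qed.

Lemma mean_at_tk_near_leading_mode : mean_at_tk_in_intervals -> mean_near_leading_mode.
Proof.
  intros Hmean t Ht m Hlead. apply is_leading_mode_pmf_iff in Hlead as [Hlo Hhi]; [| assumption].
  apply Rabs_le. split.
  - destruct m as [|m].
    + pose proof (mean_le 0 t (conj (Rle_refl 0) Ht)) as Hmono.
      rewrite mean_at_0 in Hmono. change (INR 0) with 0. lra.
    + pose proof (mean_le (tk a (S m)) t (conj (tk_nonneg (S m)) Hlo)).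
      pose proof (Hmean (S m) ltac:(lia)). lra.
  - pose proof (mean_le t (tk a (S m)) (conj Ht (Rlt_le _ _ Hhi))).
    pose proof (Hmean (S m) ltac:(lia)). rewrite S_INR in *. lra.
Qed.

Lemma near_leading_mode_modal : mean_near_leading_mode -> modal_at_integer_means.
Proof.
  intros Hnear t k Ht Hm. apply is_mode_pmf_iff; [assumption |].
  assert (Hnear_at : forall t', 0 <= t' -> exists j, tk a j <= t' < tk a (S j) /\ INR j - 1 <= mean a t' <= INR j + 1).
  { intros t' Ht'. destruct (tk_bracket t' Ht') as [j Hj]. exists j. split; [assumption |].
    pose proof (Hnear t' Ht' j (proj2 (is_leading_mode_pmf_iff t' j Ht') Hj)) as Hj_near.
    apply Rabs_le_between in Hj_near. lra. }
  destruct k as [|k].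
  { rewrite (mean_eq_0 t Ht Hm). split; [apply Rle_refl | apply tk_nonneg]. }
  pose proof (tk_succ_pos k). pose proof (tk_lt_succ (S k)).
  split.
  - destruct (Rle_lt_dec (tk a (S k)) t) as [| Hlt]; [assumption | exfalso].
    destruct (Hnear_at ((t + tk a (S k)) / 2) ltac:(lra)) as [j [Hj Hj_mean]].
    assert (Hjk : (j <= k)%nat) by (cut (j < S k)%nat; [lia | apply tk_lt_inv; lra]).
    pose proof (mean_lt t ((t + tk a (S k)) / 2) ltac:(lra)).
    apply le_INR in Hjk. rewrite S_INR in *. lra.
  - destruct (Rle_lt_dec t (tk a (S (S k)))) as [| Hlt]; [assumption | exfalso].
    destruct (Hnear_at ((t + tk a (S (S k))) / 2) ltac:(lra)) as [j [Hj Hj_mean]].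
    assert (Hjk : (S (S k) <= j)%nat) by (cut (S (S k) < S j)%nat; [lia | apply tk_lt_inv; lra]).
    pose proof (mean_lt ((t + tk a (S (S k))) / 2) t ltac:(lra)).
    apply le_INR in Hjk. rewrite !S_INR in *. lra.
Qed.

End PowerSeriesFamily.

Theorem proposition1 (a : nat -> R)
  (Hpos : forall k, 0 < a k)
  (Hdec : forall k, a (S (S k)) / a (S k) < a (S k) / a k)
  (Hlim : is_lim_seq (fun k => a (S k) / a k) 0) :
  let C := forall (t : R) (k : nat), 0 <= t -> mean a t = INR k -> is_mode (pmf a t) k in
  (cross_modal (pmf a) <-> C) /\
  (C <-> (forall k : nat, (1 <= k)%nat ->
            forall s, 0 <= s -> mean a s = INR k -> tk a k <= s <= tk a (S k))) /\
  (C <-> (forall k : nat, (1 <= k)%nat ->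
            INR k - 1 <= mean a (tk a k) <= INR k)) /\
  (C <-> (forall t : R, 0 <= t -> forall m : nat, is_leading_mode (pmf a t) m ->
            Rabs (mean a t - INR m) <= 1)).
Proof.
  intros C.
  assert (Hcross : cross_modal (pmf a) <-> modal_at_integer_means a)
    by (apply cross_modal_iff_modal_at_integer_means; assumption).
  assert (Hell : modal_at_integer_means a <-> ell_in_tk_intervals a)
    by (apply modal_at_integer_means_iff_ell; assumption).
  assert (Htk : ell_in_tk_intervals a <-> mean_at_tk_in_intervals a)
    by (apply ell_iff_mean_at_tk; assumption).
  assert (Hnear : mean_at_tk_in_intervals a -> mean_near_leading_mode a)
    by (apply mean_at_tk_near_leading_mode; assumption).
  assert (Hmodal : mean_near_leading_mode a -> modal_at_integer_means a)
    by (apply near_leading_mode_modal; assumption).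
  split; [exact Hcross |]. split; [exact Hell |]. split; [exact (iff_trans Hell Htk) |].
  split; [intros HC; apply Hnear, Htk, Hell, HC | exact Hmodal].
Qed.
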